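(* Let $d\ge1$, $T>0$, let $A\in\mathbb{R}^{d\times d}$ be symmetric positive semi-definite, let $V:\mathbb{R}^d\to\mathbb{R}$ be twice continuously differentiable, and let $U(y)=\frac12 y^{\intercal}Ay+V(y)$. Let $G:\mathbb{R}^d\to\mathbb{R}^{d\times d}$ be continuous with $G(y)$ symmetric and $v^{\intercal}G(y)v\ge v^{\intercal}\Gamma v>0$ for all $y$ and all $v\neq0$, for a fixed symmetric positive definite matrix $\Gamma$. Consider the gradient system $G(y(t))\dot y(t)=-\nabla U(y(t))$, $y(0)=y_0\in\mathbb{R}^d$. Let $\varphi_0,\ldots,\varphi_{r-1}$ be sufficiently smooth, linearly independent real functions on $[0,T]$, let $0<h\le T$, and let $X_h,Y_h,\mathcal{P}_h$ be as described in the context. Suppose $\tilde u\in X_h$ satisfies $\tilde u(0)=y_0$ and $$G(\tilde u(\tau))\,\tilde u'(\tau)+A\tilde u(\tau)=-\mathcal{P}_h\big(\nabla V(\tilde u(\cdot))\big)(\tau),\qquad\tau\in[0,1],$$ and set $y_1=\tilde u(1)$ (the EFFED method). Then $U(y_1)\le U(y_0)$.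
   Context: Function spaces: $Y_h$ is the set of $\mathbb{R}^d$-valued functions on $[0,1]$ of the form $\sum_{i=0}^{r-1}\tilde\varphi_i(\tau)W_i$ with $W_i\in\mathbb{R}^d$, where $\tilde\varphi_i(\tau)=\varphi_i(\tau h)$; $X_h$ is the set of $\mathbb{R}^d$-valued functions on $[0,1]$ of the form $W+\sum_{i=0}^{r-1}\big(\int_0^{\tau h}\varphi_i(s)\,ds\big)W_i$ with $W,W_i\in\mathbb{R}^d$. Equivalently $\tilde u(\tau)=u(\tau h)$ for $u$ in $X=\mathrm{span}\{1,\int_0^t\varphi_0,\ldots,\int_0^t\varphi_{r-1}\}$, and $\tilde u'(\tau)$ means $u'(\tau h)=\frac1h\frac{d}{d\tau}\tilde u(\tau)$, which lies in $Y_h$. Projection: for continuous $\tilde w:[0,1]\to\mathbb{R}^d$, $\mathcal{P}_h\tilde w$ is the unique element of $Y_h$ with $\int_0^1\tilde v(\tau)\cdot\mathcal{P}_h\tilde w(\tau)\,d\tau=\int_0^1\tilde v(\tau)\cdot\tilde w(\tau)\,d\tau$ for all $\tilde v\in Y_h$, where $\cdot$ denotes entrywise multiplication (so each component of $\mathcal{P}_h\tilde w$ is the $L^2(0,1)$-orthogonal projection of the corresponding component of $\tilde w$ onto $\mathrm{span}\{\tilde\varphi_0,\ldots,\tilde\varphi_{r-1}\}$). *)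

From HB Require Import structures.
From mathcomp Require Import all_boot all_order all_algebra.
From mathcomp Require Import all_classical all_reals all_analysis.
Set Implicit Arguments. Unset Strict Implicit. Unset Printing Implicit Defensive.
Import Order.TTheory GRing.Theory Num.Theory.
Import numFieldNormedType.Exports.
Local Open Scope classical_set_scope.
Local Open Scope ring_scope.

Section Defs.
Variable R : realType.

Definition oint (a b : R) (f : R -> R) : R :=
  if a <= b then \int[lebesgue_measure]_(x in `[a, b]) f x
  else - \int[lebesgue_measure]_(x in `[b, a]) f x.

Definition evec (d : nat) (i : 'I_d) : 'cV[R]_d := delta_mx i 0.

Definition partial (d : nat) (i : 'I_d) (f : 'cV[R]_d -> R) (y : 'cV[R]_d) : R :=
  'D_(evec i) f y.

Definition grad (d : nat) (f : 'cV[R]_d -> R) (y : 'cV[R]_d) : 'cV[R]_d :=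
  \col_i partial i f y.

Definition C2 (d : nat) (f : 'cV[R]_d -> R) : Prop :=
  continuous f /\
  (forall i y, derivable f y (evec i)) /\
  (forall i, continuous (partial i f)) /\
  (forall i j y, derivable (partial i f) y (evec j)) /\
  (forall i j, continuous (partial j (partial i f))).

Definition qform (d : nat) (M : 'M[R]_d) (v : 'cV[R]_d) : R := (v^T *m M *m v) 0 0.

Definition Uen (d : nat) (A : 'M[R]_d) (V : 'cV[R]_d -> R) (y : 'cV[R]_d) : R :=
  2^-1 * qform A y + V y.

(* generic element  sum_i phi_i(tau h) W_i  of Y_h *)
Definition Yfun (d r : nat) (phi : 'I_r -> R -> R) (h : R)
  (Ws : 'I_r -> 'cV[R]_d) (tau : R) : 'cV[R]_d :=
  \sum_(i < r) phi i (tau * h) *: Ws i.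

(* generic element  W + sum_i (int_0^{tau h} phi_i) W_i  of X_h *)
Definition Xfun (d r : nat) (phi : 'I_r -> R -> R) (h : R)
  (W : 'cV[R]_d) (Ws : 'I_r -> 'cV[R]_d) (tau : R) : 'cV[R]_d :=
  W + \sum_(i < r) oint 0 (tau * h) (phi i) *: Ws i.

(* u~'(tau) := u'(tau h) = (1/h) d/dtau u~(tau) *)
Definition uprime (d : nat) (h : R) (u : R -> 'cV[R]_d) (tau : R) : 'cV[R]_d :=
  h^-1 *: derive1 u tau.

(* p = P_h w : p in Y_h and  int_0^1 v . p = int_0^1 v . w  (entrywise)
   for all v in Y_h *)
Definition is_Ph (d r : nat) (phi : 'I_r -> R -> R) (h : R)
  (w p : R -> 'cV[R]_d) : Prop :=
  (exists Ws, forall tau, p tau = Yfun phi h Ws tau) /\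
  (forall (Vs : 'I_r -> 'cV[R]_d) (k : 'I_d),
     \int[lebesgue_measure]_(tau in `[0, 1]) (Yfun phi h Vs tau k 0 * p tau k 0)
     = \int[lebesgue_measure]_(tau in `[0, 1]) (Yfun phi h Vs tau k 0 * w tau k 0)).

End Defs.

(* Along the EFFED solution u, write Y := u' (an element of Y_h) and let
   E(t) := U(u(t)).  Then E'(t) = h Y^T (A u + grad V(u)), and the method's
   equation A u = - P_h grad V(u) - G(u) Y turns this into
     E'(t) = h (Y^T (grad V(u) - P_h grad V(u)) - Y^T G(u) Y).
   Integrated over [0, 1], the first term vanishes because the projection
   residual is orthogonal to Y_h, so U(y1) - U(y0) = - h int_0^1 Y^T G(u) Y,
   which is nonpositive as G(u) dominates the positive definite Gam. *)
From HB Require Import structures.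
From mathcomp Require Import all_boot all_order all_algebra.
From mathcomp Require Import all_classical all_reals all_analysis.
Set Implicit Arguments. Unset Strict Implicit. Unset Printing Implicit Defensive.
Import Order.TTheory GRing.Theory Num.Theory.
Import numFieldNormedType.Exports.
Local Open Scope classical_set_scope.
Local Open Scope ring_scope.

Lemma continuous_sum {K : numFieldType} {T : topologicalType} {W : normedModType K} n
    (f : 'I_n -> T -> W) :
  (forall i, continuous (f i)) -> continuous (fun t => \sum_(i < n) f i t).
Proof.
move=> cf x; rewrite -fct_sumE.
elim/big_ind: _ => [|g1 g2|i _]; [exact: cst_continuous | exact: continuousD | exact: cf].
Qed.

Lemma cvg_sum {K : numFieldType} {T : Type} (F : set_system T) {FF : Filter F} n
    (f : 'I_n -> T -> K) (l : 'I_n -> K) :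
  (forall i, f i @ F --> l i) ->
  (fun t => \sum_(i < n) f i t) @ F --> \sum_(i < n) l i.
Proof.
move=> fl; rewrite -fct_sumE.
elim/big_ind2: _ => [|g1 l1 g2 l2|i _]; [exact: cvg_cst | exact: cvgD | exact: fl].
Qed.

Lemma continuous_entry {K : numFieldType} {T : topologicalType} m n
    (M : T -> 'M[K]_(m, n)) i j :
  continuous M -> continuous (fun t => M t i j).
Proof.
move=> cM t; apply: (@continuous_comp _ _ _ M (fun N => N i j)); first exact: cM.
exact: coord_continuous.
Qed.

Section matrix_calculus.
Context {R : realType}.

Lemma mx_norm_entry_le m n (M : 'M[R]_(m, n)) i j : `|M i j| <= `|M|.
Proof.
rewrite [leRHS]/Num.Def.normr/= mx_normrE.
exact: le_trans (le_bigmax _ _ (i, j)).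
Qed.

Lemma mx_norm_le_entries m n (M : 'M[R]_(m, n)) (b : R) : 0 <= b ->
  (forall i j, `|M i j| <= b) -> `|M| <= b.
Proof.
move=> b0 Mb; rewrite [leLHS]/Num.Def.normr/= mx_normrE.
by apply: bigmax_le => // -[i j] _; exact: Mb.
Qed.

Lemma is_derive_mxP {V : normedModType R} m n (M : V -> 'M[R]_(m, n)) x v M' :
  is_derive x v M M' <-> forall i j, is_derive x v (fun t => M t i j) (M' i j).
Proof.
split=> [dM i j|dM].
  have dMx : derivable M x v := @ex_derive _ _ _ _ _ _ _ dM.
  apply: DeriveDef; first by move/derivable_mxP: dMx; apply.
  by have := derive_mx dMx; rewrite derive_val => /matrixP /(_ i j); rewrite mxE.
have dMx : derivable M x v.
  by apply/derivable_mxP => i j; exact: @ex_derive _ _ _ _ _ _ _ (dM i j).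
apply: DeriveDef => //; rewrite derive_mx //; apply/matrixP => i j.
by rewrite mxE derive_val.
Qed.

Lemma is_derive_trmx m n (M : R -> 'M[R]_(m, n)) (x : R) M' :
  is_derive x 1 M M' -> is_derive x 1 (fun t => (M t)^T) M'^T.
Proof.
move/is_derive_mxP=> dM; apply/is_derive_mxP => i j.
under [fun t => _]funext do rewrite mxE.
by rewrite mxE; exact: dM.
Qed.

Lemma is_derive_mulmx m n p (M : R -> 'M[R]_(m, n)) (N : R -> 'M[R]_(n, p))
    (x : R) M' N' :
  is_derive x 1 M M' -> is_derive x 1 N N' ->
  is_derive x 1 (fun t => M t *m N t) (M' *m N x + M x *m N').
Proof.
move=> /is_derive_mxP dM /is_derive_mxP dN; apply/is_derive_mxP => i j.
under [fun t => _]funext do rewrite mxE.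
have := is_derive_sum (fun k : 'I_n => is_deriveM (dM i k) (dN k j)).
rewrite -fct_sumE; move/is_derive_eq; apply.
rewrite !mxE -big_split; apply: eq_bigr => k _ /=.
by rewrite addrC [N x k j *: _]mulrC.
Qed.

Lemma is_derive_scalemx m n (s : R -> R) (M : 'M[R]_(m, n)) (x : R) ds :
  is_derive x 1 s ds -> is_derive x 1 (fun t => s t *: M) (ds *: M).
Proof.
move=> dsx; apply/is_derive_mxP => i j.
under [fun t => _]funext do rewrite mxE.
have := is_deriveM dsx (is_derive_cst (M i j) x 1).
by move/is_derive_eq; apply; rewrite mxE scaler0 add0r [_ *: _]mulrC.
Qed.

Lemma dotmxE d (a b : 'cV[R]_d) : (a^T *m b) 0 0 = \sum_k a k 0 * b k 0.
Proof. by rewrite mxE; apply: eq_bigr => k _; rewrite mxE. Qed.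

Lemma is_derive_qform d (M : 'M[R]_d) (c : R -> 'cV[R]_d) (x : R) c' :
  M^T = M -> is_derive x 1 c c' ->
  is_derive x 1 (fun t => qform M (c t)) (2 * (c'^T *m M *m c x) 0 0).
Proof.
move=> Msym dc.
have := is_derive_mulmx (is_derive_mulmx (is_derive_trmx dc) (is_derive_cst M x 1)) dc.
move/is_derive_mxP/(_ 0 0)/is_derive_eq; apply.
have swap : ((c x)^T *m M *m c') 0 0 = (c'^T *m M *m c x) 0 0.
  have tr00 (X : 'M[R]_1) : X 0 0 = X^T 0 0 by rewrite mxE.
  by rewrite [LHS]tr00 !trmx_mul trmxK Msym mulmxA.
by rewrite /cst mulmx0 addr0 [in LHS]mxE swap mulr_natl mulr2n.
Qed.

End matrix_calculus.

Lemma continuous_qform {R : realType} {T : topologicalType} {d : nat}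
    (M : T -> 'M[R]_d) (v : T -> 'cV[R]_d) :
  continuous M -> continuous v -> continuous (fun t => qform (M t) (v t)).
Proof.
move=> cM cv.
have -> : (fun t => qform (M t) (v t)) =
    (fun t => \sum_k v t k 0 * \sum_j M t k j * v t j 0).
  apply/funext => t; rewrite /qform -mulmxA dotmxE.
  by apply: eq_bigr => k _; rewrite mxE.
apply: continuous_sum => k t; apply: continuousM; first exact: continuous_entry.
move: t; apply: continuous_sum => j s.
by apply: continuousM; exact: continuous_entry.
Qed.

Section chain_rule.
Context {R : realType} {d : nat}.
Implicit Types (f : 'cV[R]_d -> R) (a e y z w : 'cV[R]_d).

Lemma is_derive_along_line f a e s :
  derivable f (a + s *: e) e ->
  is_derive s 1 (fun t => f (a + t *: e)) ('D_e f (a + s *: e)).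
Proof.
move=> df.
have quotE : (fun k : R => k^-1 *: (f (a + (k *: 1 + s) *: e) - f (a + s *: e)))
    = (fun k => k^-1 *: (f (k *: e + (a + s *: e)) - f (a + s *: e))).
  by apply/funext => k; rewrite [k *: 1]mulr1 scalerDl addrCA.
by apply: DeriveDef; rewrite /derivable /derive /= quotE.
Qed.

Lemma mvt_along_line f a e c :
  (forall t, derivable f (a + t *: e) e) ->
  exists2 s, `|s| <= `|c| & f (a + c *: e) - f a = c * 'D_e f (a + s *: e).
Proof.
move=> df; pose g t := f (a + t *: e).
have dg (t : R) : is_derive t 1 g ('D_e f (a + t *: e)) := is_derive_along_line (df t).
have cg : continuous g.
  move=> t; apply: differentiable_continuous; apply/derivable1_diffP.
  exact: @ex_derive _ _ _ _ _ _ _ (dg t).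
have g0 : g 0 = f a by rewrite /g scale0r addr0.
case: (leP 0 c) => c0.
  have [s /[!in_itv] /andP[s0 sc] gE] :=
    MVT_segment c0 (fun t _ => dg t) (continuous_subspaceT cg).
  exists s; first by rewrite !ger0_norm // (le_trans s0 sc).
  by rewrite -g0 gE subr0 mulrC.
have [s /[!in_itv] /andP[cs s0] gE] :=
  MVT_segment (ltW c0) (fun t _ => dg t) (continuous_subspaceT cg).
exists s; first by rewrite !ler0_norm ?lerN2 // ltW.
by rewrite -g0 -[LHS]opprB gE sub0r mulrN opprK mulrC.
Qed.

(* Walk from z to w one coordinate at a time, applying the mean value theorem
   on each segment. *)
Lemma increment_partials f z w :
  (forall i y, derivable f y (evec R i)) ->
  exists xi : 'I_d -> 'cV[R]_d, (forall j, `|xi j - z| <= `|w - z|) /\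
    f w - f z = \sum_(j < d) (w - z) j 0 * partial j f (xi j).
Proof.
move=> df.
pose P (n : nat) : 'cV[R]_d := \col_i (if (i < n)%N then w i 0 else z i 0).
have P0 : P 0%N = z by apply/matrixP => i k; rewrite (ord1 k) !mxE.
have Pd : P d = w by apply/matrixP => i k; rewrite (ord1 k) !mxE ltn_ord.
have PS (j : 'I_d) : P j.+1 = P j + (w j 0 - z j 0) *: evec R j.
  apply/matrixP => i k; rewrite (ord1 k) !mxE /= andbT ltnS leq_eqVlt val_eqE.
  have [->|ij] := eqVneq i j; first by rewrite ltnn mulr1 addrC subrK.
  by rewrite mulr0 addr0.
have step (j : 'I_d) : exists xi, `|xi - z| <= `|w - z| /\
    f (P j.+1) - f (P j) = (w - z) j 0 * partial j f xi.
  have [s sc fE] := @mvt_along_line f (P j) (evec R j) (w j 0 - z j 0) (fun t => df j _).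
  exists (P j + s *: evec R j); split; last by rewrite PS fE /partial !mxE.
  apply: mx_norm_le_entries => // i k; rewrite (ord1 k) !mxE /= andbT.
  have [->|ij] := eqVneq i j.
    rewrite /= ltnn mulr1 addrAC subrr add0r (le_trans sc) //.
    by have := mx_norm_entry_le (w - z) j 0; rewrite !mxE.
  rewrite mulr0 addr0; case: ltnP => _; last by rewrite subrr normr0.
  by have := mx_norm_entry_le (w - z) i 0; rewrite !mxE.
have [xi xiP] := choice step.
exists xi; split; first by move=> j; case: (xiP j).
have -> : f w - f z = f (P d) - f (P 0%N) by rewrite Pd P0.
rewrite -(telescope_sumr (fun n => f (P n)) (leq0n d)) big_mkord.
by apply: eq_bigr => j _; case: (xiP j).
Qed.

Lemma is_derive_comp_partials f (c : R -> 'cV[R]_d) (x : R) c' :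
  (forall i y, derivable f y (evec R i)) ->
  (forall i, continuous (partial i f)) ->
  is_derive x 1 c c' ->
  is_derive x 1 (f \o c) ((c'^T *m grad f (c x)) 0 0).
Proof.
move=> df cdf dc.
have [xi xiP] := choice (fun k : R => increment_partials (c x) (c (k *: 1 + x)) df).
have c_quot : (fun k : R => k^-1 *: (c (k *: 1 + x) - c x)) @ 0^' --> c'.
  by rewrite -(@derive_val _ _ _ _ _ _ _ dc); exact: (@ex_derive _ _ _ _ _ _ _ dc).
have c_shift : (fun k : R => c (k *: 1 + x)) @ 0^' --> c x.
  have cx : {for x, continuous c}.
    apply: differentiable_continuous; apply/derivable1_diffP.
    exact: @ex_derive _ _ _ _ _ _ _ dc.
  apply: continuous_cvg cx _; apply: cvg_within_filter.
  have -> : (fun k : R => k *: 1 + x) = (fun k => k + x).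
    by apply/funext => k; rewrite [_ *: _]mulr1.
  have : (fun k : R => k + x) @ 0 --> 0 + x.
    by apply: cvgD; [exact: cvg_id | exact: cvg_cst].
  by rewrite add0r.
have xi_lim i : (fun k => xi k i) @ 0^' --> c x.
  apply/cvgrPdist_le => e e0; move/cvgrPdist_le: c_shift => /(_ e e0).
  apply: filterS => k; rewrite !(distrC (c x)); apply: le_trans.
  by case: (xiP k) => + _; apply.
have quotE : (fun k : R => k^-1 *: ((f \o c) (k *: 1 + x) - (f \o c) x)) =
    (fun k => \sum_i (k^-1 *: (c (k *: 1 + x) - c x)) i 0 * partial i f (xi k i)).
  apply/funext => k /=; case: (xiP k) => _ ->.
  by rewrite [_ *: _]mulr_sumr; apply: eq_bigr => i _; rewrite [in RHS]mxE mulrA.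
have lim : (fun k : R => k^-1 *: ((f \o c) (k *: 1 + x) - (f \o c) x)) @ 0^' -->
    (c'^T *m grad f (c x)) 0 0.
  rewrite quotE dotmxE; apply: cvg_sum => i; rewrite mxE; apply: cvgM.
    exact: continuous_cvg (@coord_continuous _ _ _ i 0 _) c_quot.
  exact: continuous_cvg (cdf i _) (xi_lim i).
by apply: DeriveDef; [apply/cvg_ex; eexists; exact: lim | exact: cvg_lim lim].
Qed.

End chain_rule.

Lemma is_derive_Uen {R : realType} {d : nat} (A : 'M[R]_d) (V : 'cV[R]_d -> R)
    (c : R -> 'cV[R]_d) (x : R) c' :
  A^T = A ->
  (forall i y, derivable V y (evec R i)) -> (forall i, continuous (partial i V)) ->
  is_derive x 1 c c' ->
  is_derive x 1 (fun t => Uen A V (c t)) ((c'^T *m (A *m c x + grad V (c x))) 0 0).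
Proof.
move=> Asym dV cdV dc.
have := is_deriveD (is_deriveZ (2^-1) (is_derive_qform Asym dc))
  (is_derive_comp_partials dV cdV dc).
move/is_derive_eq; apply.
by rewrite mulmxDr [in RHS]mxE mulmxA [_ *: _]mulrA mulVf ?pnatr_eq0 // mul1r.
Qed.

Section real_integrals.
Context {R : realType}.
Local Notation mu := (@lebesgue_measure R).
Implicit Types f : R -> R.

Lemma continuous_integrable_itv f a b : continuous f ->
  mu.-integrable `[a, b] (EFin \o f).
Proof.
move=> cf; apply: continuous_compact_integrable; first exact: segment_compact.
exact: continuous_subspaceT.
Qed.

Lemma Rintegral_sum_itv (a b : R) n (g : 'I_n -> R -> R) :
  (forall i, continuous (g i)) ->
  \int[mu]_(x in `[a, b]) (\sum_(i < n) g i x) =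
  \sum_(i < n) \int[mu]_(x in `[a, b]) g i x.
Proof.
move=> cg; apply: EFin_inj; rewrite -sumEFin.
have gi i := continuous_integrable_itv a b (cg i).
have gsum : mu.-integrable `[a, b] (fun x => \sum_(i < n) (g i x)%:E).
  by apply: integrable_sum => // i _; exact: gi.
rewrite /Rintegral; under eq_integral do rewrite -sumEFin.
rewrite fineK; last exact: integrable_fin_num.
rewrite integral_sum //.
by apply: eq_bigr => i _; rewrite fineK // (integrable_fin_num _ (gi i)).
Qed.

Lemma Rintegral_is_derive (F f : R -> R) (a b : R) : a < b ->
  continuous F -> continuous f -> (forall x : R, a < x < b -> is_derive x 1 F (f x)) ->
  \int[mu]_(x in `[a, b]) f x = F b - F a.
Proof.
move=> ab cF cf dF.
have F_LR : derivable_oo_LRcontinuous F a b.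
  split.
  - by move=> x /[!in_itv] /dF /(@ex_derive _ _ _ _ _ _ _).
  - exact: cvg_at_right_filter (cF a).
  - exact: cvg_at_left_filter (cF b).
have F'f : {in `]a, b[, F^`()%classic =1 f}.
  by move=> x /[!in_itv] /dF dFx; rewrite derive1E (@derive_val _ _ _ _ _ _ _ dFx).
by rewrite /Rintegral (continuous_FTC2 ab (continuous_subspaceT cf) F_LR F'f).
Qed.

Definition prim0 f (x : R) : R := \int[mu]_(t in `[0, x]) f t.

Lemma oint0_prim0 f (x : R) : 0 <= x -> oint 0 x f = prim0 f x.
Proof. by move=> x0; rewrite /oint x0. Qed.

Lemma is_derive_prim0 f (x : R) : continuous f -> 0 < x -> is_derive x 1 (prim0 f) (f x).
Proof.
move=> cf x0.
have [dF F'x] := continuous_FTC1_closed (ltr_pwDr ltr01 (lexx x))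
  (continuous_integrable_itv 0 (x + 1) cf) x0 (cf x).
by apply: DeriveDef => //; rewrite -derive1E.
Qed.

Lemma continuous_prim0 f : continuous f -> continuous (prim0 f).
Proof.
move=> cf x; case: (ltgtP x 0) => [x0|x0|->].
- apply: (@near_cst_continuous _ _ 0).
  move: (lt_nbhsl x0); apply: filterS => y y0.
  by rewrite /prim0 set_itv_ge ?Rintegral_set0 // bnd_simp -ltNge.
- apply: differentiable_continuous; apply/derivable1_diffP.
  exact: @ex_derive _ _ _ _ _ _ _ (is_derive_prim0 cf x0).
- have prim00 : prim0 f 0 = 0 by rewrite /prim0 set_itv1 Rintegral_set1.
  rewrite /continuous_at prim00.
  exact: parameterized_integral_cvg_left ltr01 (continuous_integrable_itv 0 1 cf).
Qed.

End real_integrals.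

Section effed_curve.
Context {R : realType} {d r : nat} (phi : 'I_r -> R -> R) (h : R).
Hypothesis phi_cont : forall i, continuous (phi i).
Hypothesis h_gt0 : 0 < h.
Local Notation mu := (@lebesgue_measure R).
Implicit Types (W : 'cV[R]_d) (Ws Vs : 'I_r -> 'cV[R]_d) (t : R).

(* [Xfun] with [prim0] in place of [oint]: the two agree for t >= 0, and this
   version is continuous on all of R, as the fundamental theorem needs at t = 0. *)
Definition Xcurve (W : 'cV[R]_d) (Ws : 'I_r -> 'cV[R]_d) (t : R) : 'cV[R]_d :=
  W + \sum_(l < r) prim0 (phi l) (t * h) *: Ws l.

Lemma Xfun_Xcurve W Ws (t : R) : 0 <= t -> Xfun phi h W Ws t = Xcurve W Ws t.
Proof.
move=> t0; rewrite /Xfun /Xcurve; congr (_ + _); apply: eq_bigr => l _.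
by rewrite oint0_prim0 // mulr_ge0 // ltW.
Qed.

Lemma continuous_Yfun (Ws : 'I_r -> 'cV[R]_d) : continuous (Yfun phi h Ws).
Proof.
apply: continuous_sum => l t; apply: continuousZ; last exact: cst_continuous.
by apply: continuous_comp; [exact: mulrr_continuous | exact: phi_cont].
Qed.

Lemma continuous_Xcurve W Ws : continuous (Xcurve W Ws).
Proof.
have csum : continuous (fun t : R => \sum_(l < r) prim0 (phi l) (t * h) *: Ws l).
  apply: continuous_sum => l t.
  apply: (continuousZ (s := fun t : R => prim0 (phi l) (t * h)));
    last exact: cst_continuous.
  by apply: continuous_comp; [exact: mulrr_continuous | exact: continuous_prim0].
by move=> t; apply: continuousD; [exact: cst_continuous | exact: csum].
Qed.

Lemma is_derive_Xcurve W Ws (t : R) : 0 < t ->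
  is_derive t 1 (Xcurve W Ws) (h *: Yfun phi h Ws t).
Proof.
move=> t0.
have dscale : is_derive t 1 (fun s : R => s * h) h.
  have := is_deriveM (is_derive_id t 1) (is_derive_cst h t 1).
  by move/is_derive_eq; apply; rewrite /= scaler0 add0r [_ *: _]mulr1.
have dprim l : is_derive t 1 (prim0 (phi l) \o ( *%R^~ h)) (phi l (t * h) * h).
  by apply: is_derive1_comp dscale; exact: is_derive_prim0 (mulr_gt0 t0 h_gt0).
have := is_deriveD (is_derive_cst W t 1)
  (is_derive_sum (fun l => is_derive_scalemx (Ws l) (dprim l))).
rewrite fct_sumE; move/is_derive_eq; apply.
rewrite add0r /Yfun scaler_sumr; apply: eq_bigr => l _.
by rewrite scalerA mulrC.
Qed.

Lemma uprime_Xfun W Ws (t : R) : 0 < t ->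
  uprime h (Xfun phi h W Ws) t = Yfun phi h Ws t.
Proof.
move=> t0; rewrite /uprime derive1E.
have XE : \near t, Xfun phi h W Ws t = Xcurve W Ws t.
  by move: (lt_nbhsr t0); apply: filterS => s /ltW; exact: Xfun_Xcurve.
rewrite (near_eq_derive (1 : R) XE) (@derive_val _ _ _ _ _ _ _ (is_derive_Xcurve W Ws t0)).
by rewrite scalerA mulVf ?gt_eqF // scale1r.
Qed.

Lemma is_Ph_continuous (w p : R -> 'cV[R]_d) : is_Ph phi h w p -> continuous p.
Proof. by case=> -[Wp /funext ->] _; exact: continuous_Yfun. Qed.

Lemma eq_is_Ph (w1 w2 p : R -> 'cV[R]_d) :
  (forall t, 0 <= t <= 1 -> w1 t = w2 t) -> is_Ph phi h w1 p -> is_Ph phi h w2 p.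
Proof.
move=> w12 [pY pw1]; split=> // Vs k; rewrite pw1.
by apply: eq_Rintegral => t; rewrite inE /= in_itv /= => /w12 ->.
Qed.

Lemma is_Ph_orthogonal (w p : R -> 'cV[R]_d) Vs :
  (forall k, continuous (fun t => w t k 0)) -> is_Ph phi h w p ->
  \int[mu]_(t in `[0, 1]) ((Yfun phi h Vs t)^T *m (w t - p t)) 0 0 = 0.
Proof.
move=> cw pPh; have cp := is_Ph_continuous pPh; case: pPh => _ pw.
have cY k : continuous (fun t => Yfun phi h Vs t k 0).
  by apply: continuous_entry; exact: continuous_Yfun.
have cYw k : continuous (fun t => Yfun phi h Vs t k 0 * w t k 0).
  by move=> t; apply: continuousM; [exact: cY | exact: cw].
have cYp k : continuous (fun t => Yfun phi h Vs t k 0 * p t k 0).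
  by move=> t; apply: continuousM; [exact: cY | exact: continuous_entry].
have dotE t : ((Yfun phi h Vs t)^T *m (w t - p t)) 0 0 =
    \sum_k (Yfun phi h Vs t k 0 * w t k 0 - Yfun phi h Vs t k 0 * p t k 0).
  by rewrite dotmxE; apply: eq_bigr => k _; rewrite !mxE mulrBr.
under eq_Rintegral => t _ do rewrite dotE.
rewrite Rintegral_sum_itv => [|k t]; last exact: continuousB (cYw k t) (cYp k t).
apply: big1 => k _.
by rewrite RintegralB ?continuous_integrable_itv // (pw Vs k) subrr.
Qed.

End effed_curve.

Lemma dissipation_identity {R : realType} {d : nat} (A M : 'M[R]_d) (h : R)
    (a y g q : 'cV[R]_d) :
  M *m y + A *m a = - q ->
  ((h *: y)^T *m (A *m a + g)) 0 0 = h * ((y^T *m (g - q)) 0 0 - qform M y).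
Proof.
move=> E; have -> : A *m a = - q - M *m y by rewrite -E addrAC subrr add0r.
rewrite linearZ /= -scalemxAl mxE /qform -mulmxA; congr (_ * _).
have -> : - q - M *m y + g = (g - q) - M *m y by rewrite addrC addrA.
by rewrite mulmxBr !mxE.
Qed.

Section energy_decay.
Context {R : realType} {d r : nat} (phi : 'I_r -> R -> R) (h : R).
Variables (A : 'M[R]_d) (V : 'cV[R]_d -> R) (G : 'cV[R]_d -> 'M[R]_d).
Hypothesis phi_cont : forall i, continuous (phi i).
Hypothesis h_gt0 : 0 < h.
Hypothesis A_sym : A^T = A.
Hypothesis V_cont : continuous V.
Hypothesis V_derivable : forall i y, derivable V y (evec R i).
Hypothesis partial_V_cont : forall i, continuous (partial i V).
Hypothesis G_cont : continuous G.
Hypothesis G_psd : forall y v, 0 <= qform (G y) v.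
Variables (W : 'cV[R]_d) (Ws : 'I_r -> 'cV[R]_d) (p : R -> 'cV[R]_d).
Implicit Types t : R.
Local Notation mu := (@lebesgue_measure R).
Local Notation u := (Xcurve phi h W Ws).
Local Notation Y := (Yfun phi h Ws).
Hypothesis p_proj : is_Ph phi h (fun t => grad V (u t)) p.
Hypothesis effed : forall t, 0 < t < 1 -> G (u t) *m Y t + A *m u t = - p t.

Let energy t := Uen A V (u t).
Let residual t : R := ((Y t)^T *m (grad V (u t) - p t)) 0 0.
Let dissipation t := qform (G (u t)) (Y t).

Lemma is_derive_energy t : 0 < t < 1 ->
  is_derive t 1 energy (h * (residual t - dissipation t)).
Proof.
move=> t01; have /andP[t0 _] := t01.
have := is_derive_Uen A_sym V_derivable partial_V_cont
  (is_derive_Xcurve phi_cont h_gt0 W Ws t0).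
by move/is_derive_eq; apply; exact: dissipation_identity (effed t01).
Qed.

Let u_cont : continuous u. Proof. exact: continuous_Xcurve. Qed.

Let energy_cont : continuous energy.
Proof.
have qA := continuous_qform (@cst_continuous _ _ A) u_cont.
have half : continuous (fun _ : R => 2^-1 : R) := @cst_continuous _ _ _.
move=> t; rewrite /energy /Uen.
have Vu := continuous_comp (@u_cont t) (@V_cont _).
by have := continuousD (continuousM (half t) (qA t)) Vu.
Qed.

Let dissipation_cont : continuous dissipation.
Proof.
apply: continuous_qform; last exact: continuous_Yfun.
by move=> t; have := continuous_comp (@u_cont t) (@G_cont _).
Qed.

Let partial_V_u_cont k : continuous (fun t => partial k V (u t)).
Proof. by move=> t; have := continuous_comp (@u_cont t) (@partial_V_cont k _); apply. Qed.

Let residual_cont : continuous residual.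
Proof.
have cY k : continuous (fun t => Y t k 0).
  by apply: continuous_entry; exact: continuous_Yfun.
have cp k : continuous (fun t => p t k 0).
  by apply: continuous_entry; exact: is_Ph_continuous p_proj.
rewrite /residual; under [fun t => _]funext do rewrite dotmxE.
apply: continuous_sum => k t; under [fun t => _]funext do rewrite !mxE.
by have := continuousM (cY k t) (continuousB (@partial_V_u_cont k t) (cp k t)).
Qed.

Lemma energy_increment :
  energy 1 - energy 0 = - h * \int[mu]_(t in `[0, 1]) dissipation t.
Proof.
have cB : continuous (fun t => residual t - dissipation t).
  by move=> t; have := continuousB (@residual_cont t) (@dissipation_cont t).
have cdE : continuous (fun t => h * (residual t - dissipation t)).
  have ch : continuous (fun _ : R => h) := @cst_continuous _ _ _.
  by move=> t; have := continuousM (ch t) (cB t).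
rewrite -(Rintegral_is_derive ltr01 energy_cont cdE is_derive_energy).
rewrite RintegralZl ?(continuous_integrable_itv 0 1 cB) //.
rewrite RintegralB ?(continuous_integrable_itv 0 1 residual_cont)
  ?(continuous_integrable_itv 0 1 dissipation_cont) //.
rewrite is_Ph_orthogonal // => [|k]; first by rewrite sub0r mulrN mulNr.
by under [fun t => _]funext do rewrite mxE; exact: partial_V_u_cont.
Qed.

Lemma energy_nonincreasing : energy 1 <= energy 0.
Proof.
rewrite -subr_le0 energy_increment mulNr oppr_le0 mulr_ge0 ?(ltW h_gt0) //.
by apply: Rintegral_ge0 => t _; exact: G_psd.
Qed.

End energy_decay.

Theorem theorem3p2 (R : realType) (d : nat) (T : R)
  (A : 'M[R]_d) (V : 'cV[R]_d -> R) (G : 'cV[R]_d -> 'M[R]_d) (Gam : 'M[R]_d)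
  (y0 : 'cV[R]_d) (r : nat) (phi : 'I_r -> R -> R) (h : R)
  (u : R -> 'cV[R]_d) :
  (1 <= d)%N -> 0 < T ->
  A^T = A -> (forall v, 0 <= qform A v) ->
  C2 V ->
  continuous G ->
  (forall y, (G y)^T = G y) ->
  Gam^T = Gam ->
  (forall y v, v != 0 -> qform Gam v <= qform (G y) v /\ 0 < qform Gam v) ->
  (forall i, continuous (phi i)) ->
  (forall c : 'I_r -> R,
     (forall t, 0 <= t <= T -> \sum_(i < r) c i * phi i t = 0) ->
     forall i, c i = 0) ->
  0 < h -> h <= T ->
  (exists W Ws, forall tau, u tau = Xfun phi h W Ws tau) ->
  u 0 = y0 ->
  (exists p, is_Ph phi h (fun tau => grad V (u tau)) p /\
     forall tau, 0 <= tau <= 1 ->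
       G (u tau) *m uprime h u tau + A *m u tau = - p tau) ->
  Uen A V (u 1) <= Uen A V y0.
Proof.
move=> _ _ A_sym _ [V_cont [V_der [partial_V_cont _]]] G_cont _ _ G_Gam phi_cont _
  h_gt0 _ [W [Ws /funext ->]] <- [p [p_proj effed]].
have G_psd y v : 0 <= qform (G y) v.
  have [->|v0] := eqVneq v 0; first by rewrite /qform mulmx0 mxE.
  by have [GamG Gam_pos] := G_Gam y v v0; exact: le_trans (ltW Gam_pos) GamG.
rewrite !Xfun_Xcurve ?ler01 //.
apply: (energy_nonincreasing phi_cont h_gt0 A_sym V_cont V_der partial_V_cont G_cont G_psd
  (p := p)).
- by apply: eq_is_Ph p_proj => t /andP[t0 _]; rewrite Xfun_Xcurve.
- move=> t /andP[t0 t1]; rewrite -Xfun_Xcurve ?ltW // -(uprime_Xfun phi_cont h_gt0 W Ws t0).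
  by apply: effed; rewrite !ltW.
Qed.
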